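(* Let $X,Y$ be positive words and suppose $a_{ts}X\doteq a_{rq}Y$ (with $n\ge t>s\ge1$, $n\ge r>q\ge1$). Then: (I) If $t=r$ and $s=q$, then $X\doteq Y$. (II) (three distinct indices) (i) If $t=r$ and $q<s$, then $X\doteq a_{sq}Z$, $Y\doteq a_{ts}Z$ for some positive word $Z$; (ii) if $t=r$ and $s<q$, then $X\doteq a_{tq}Z$, $Y\doteq a_{qs}Z$; (iii) if $t=q$, then $X\doteq a_{rs}Z$, $Y\doteq a_{ts}Z$; (iv) if $s=r$, then $X\doteq a_{sq}Z$, $Y\doteq a_{tq}Z$; (v) if $s=q$ and $r<t$, then $X\doteq a_{tr}Z$, $Y\doteq a_{ts}Z$; (vi) if $s=q$ and $t<r$, then $X\doteq a_{rs}Z$, $Y\doteq a_{rt}Z$; in each case for some positive word $Z$. (III) If the four indices are distinct and $(t-r)(t-q)(s-r)(s-q)>0$, then $X\doteq a_{rq}Z$ and $Y\doteq a_{ts}Z$ for some positive word $Z$. (IV) If the four indices are distinct: (i) if $q<s<r<t$, then $X\doteq a_{tr}a_{sq}Z$ and $Y\doteq a_{tq}a_{rs}Z$ for some positive word $Z$; (ii) if $s<q<t<r$, then $X\doteq a_{tq}a_{rs}Z$ and $Y\doteq a_{rt}a_{qs}Z$ for some positive word $Z$.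
   Context: $B_n$ is the $n$-string braid group with band generators $a_{ts}$ ($n\ge t>s\ge1$), where $a_{ts}=(\sigma_{t-1}\cdots\sigma_{s+1})\sigma_s(\sigma_{s+1}^{-1}\cdots\sigma_{t-1}^{-1})$. The band relations are: (R1) $a_{ts}a_{rq}=a_{rq}a_{ts}$ if $(t-r)(t-q)(s-r)(s-q)>0$; (R2) $a_{ts}a_{sr}=a_{tr}a_{ts}=a_{sr}a_{tr}$ for $n\ge t>s>r\ge1$. A positive word is a word in positive powers of the $a_{ts}$. Two positive words $X,Y$ are positively equivalent, $X\doteq Y$, if one can be transformed into the other by a finite sequence of single direct applications of relations (R1), (R2) to subwords. *)

From mathcomp Require Import all_boot all_order all_algebra.
From Stdlib Require Import Relation_Operators.
Set Implicit Arguments. Unset Strict Implicit. Unset Printing Implicit Defensive.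
Import GRing.Theory Num.Theory.

(* a letter (t, s) stands for the band generator a_{ts} *)
Definition band := (nat * nat)%type.
Definition a (t s : nat) : band := (t, s).

Definition valid_band (n : nat) (x : band) : bool :=
  [&& 1 <= x.2, x.2 < x.1 & x.1 <= n]%N.

Definition pos_word (n : nat) (w : seq band) : bool := all (valid_band n) w.

Inductive band_rel (n : nat) : seq band -> seq band -> Prop :=
| R1 t s r q :
    valid_band n (a t s) -> valid_band n (a r q) ->
    (0 < ((t%:Z - r%:Z) * (t%:Z - q%:Z) * (s%:Z - r%:Z) * (s%:Z - q%:Z))%R)%R ->
    band_rel n [:: a t s; a r q] [:: a r q; a t s]
| R2a t s r : (n >= t)%N -> (t > s)%N -> (s > r)%N -> (r >= 1)%N ->
    band_rel n [:: a t s; a s r] [:: a t r; a t s]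
| R2b t s r : (n >= t)%N -> (t > s)%N -> (s > r)%N -> (r >= 1)%N ->
    band_rel n [:: a t r; a t s] [:: a s r; a t r]
| R2c t s r : (n >= t)%N -> (t > s)%N -> (s > r)%N -> (r >= 1)%N ->
    band_rel n [:: a t s; a s r] [:: a s r; a t r].

Inductive pos_step (n : nat) : seq band -> seq band -> Prop :=
| pos_step_intro U V A B :
    (band_rel n A B \/ band_rel n B A) ->
    pos_step n (U ++ A ++ V) (U ++ B ++ V).

Definition pos_equiv (n : nat) : seq band -> seq band -> Prop :=
  clos_refl_trans (seq band) (pos_step n).

(* Garside-style left cancellation, after Dehornoy's subword reversing.  For
   letters x, y let [compl x y] be the complement of x in their least common
   multiple, so that x (compl x y) ≡ y (compl y x); the clauses of the theorem
   list its values, up to one commutation in (IV)(i).  We show that x X ≡ y Y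
   forces X ≡ (compl x y) Z and Y ≡ (compl y x) Z, by induction on the length
   of the words and then on the derivation of the equivalence.  A single
   relation already has the shape x (compl x z) = z (compl z x).  For a chain
   x X ≡ z V ≡ y Y, the factorisations through z are merged by reversing
   (compl z x) against (compl z y), using the induction hypothesis on the
   shorter word V, and then by the cube condition for x, z, y.  The cube
   condition involves at most six strand indices, so an order-preserving
   relabelling reduces it to B_k with k <= 6, where it is checked by
   computation. *)

From mathcomp Require Import all_boot all_order all_algebra.
From Stdlib Require Import Relation_Operators.
From mathcomp Require Import zify.
Set Implicit Arguments. Unset Strict Implicit. Unset Printing Implicit Defensive.

Lemma pos_word_cat n u v : pos_word n (u ++ v) = pos_word n u && pos_word n v.
Proof. exact: all_cat. Qed.

Section PositiveEquivalence.
Variable n : nat.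

Lemma pos_equiv_refl u : pos_equiv n u u.
Proof. exact: rt_refl. Qed.

Lemma pos_equiv_trans u v w : pos_equiv n u v -> pos_equiv n v w -> pos_equiv n u w.
Proof. exact: rt_trans. Qed.

Lemma pos_step_sym u v : pos_step n u v -> pos_step n v u.
Proof. by case=> U V A B H; constructor; case: H; auto. Qed.

Lemma pos_equiv_sym u v : pos_equiv n u v -> pos_equiv n v u.
Proof.
elim=> [x y /pos_step_sym H | x | x y z _ H1 _ H2]; first exact: rt_step.
  exact: rt_refl.
exact: rt_trans H2 H1.
Qed.

Lemma pos_equiv_catl w u v : pos_equiv n u v -> pos_equiv n (w ++ u) (w ++ v).
Proof.
elim=> [x y [U V A B H]| x | x y z _ H1 _ H2]; last exact: rt_trans H1 H2.
  by apply: rt_step; rewrite !catA -!(catA (w ++ U)); constructor.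
exact: rt_refl.
Qed.

Lemma pos_equiv_catr w u v : pos_equiv n u v -> pos_equiv n (u ++ w) (v ++ w).
Proof.
elim=> [x y [U V A B H]| x | x y z _ H1 _ H2]; last exact: rt_trans H1 H2.
  by apply: rt_step; rewrite -!catA; constructor.
exact: rt_refl.
Qed.

Lemma band_rel_size_valid A B :
  band_rel n A B -> [/\ size A = size B, pos_word n A & pos_word n B].
Proof.
case=> [t s r q vts vrq _ | t s r | t s r | t s r];
  rewrite /pos_word /= ?vts ?vrq /valid_band /=; split=> //; lia.
Qed.

Lemma pos_step_size_valid u v :
  pos_step n u v -> size u = size v /\ (pos_word n u -> pos_word n v).
Proof.
case=> U V A B H; rewrite !size_cat !pos_word_cat.
have [eAB vA vB] : [/\ size A = size B, pos_word n A & pos_word n B].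
  by case: H => /band_rel_size_valid [].
by rewrite eAB vB; split=> // /and3P[-> _ ->].
Qed.

Lemma pos_equiv_size u v : pos_equiv n u v -> size u = size v.
Proof. by elim=> [x y /pos_step_size_valid[] | | x y z _ -> _ ->]. Qed.

Lemma pos_equiv_valid u v : pos_equiv n u v -> pos_word n u -> pos_word n v.
Proof. by elim=> [x y /pos_step_size_valid[] | | x y z _ H1 _ H2 /H1/H2]. Qed.

End PositiveEquivalence.

(* The condition of (R1): the chords joining s, t and q, r on the boundary of
   the disc have four distinct ends and do not cross. *)
Definition noncrossing (t s r q : nat) : bool :=
  [&& t != r, t != q, s != r, s != q &
      ~~ ((t < r) (+) (t < q) (+) (s < r) (+) (s < q))].

Lemma R1_condE (t s r q : nat) :
  (0 < (t%:Z - r%:Z) * (t%:Z - q%:Z) * (s%:Z - r%:Z) * (s%:Z - q%:Z))%R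
  = noncrossing t s r q.
Proof.
have sgz_sub (i j : nat) :
    sgz (i%:Z - j%:Z) = (if (i < j)%N then -1 else if i == j then 0 else 1)%R.
  case: ltngtP => h; last by rewrite h GRing.subrr.
    by apply: ltr0_sgz; rewrite Num.Theory.subr_lt0 ltz_nat.
  by apply: gtr0_sgz; rewrite Num.Theory.subr_gt0 ltz_nat.
rewrite -sgz_gt0 !sgzM !sgz_sub /noncrossing.
by case: (ltngtP t r); case: (ltngtP t q); case: (ltngtP s r); case: (ltngtP s q).
Qed.

Lemma noncrossing_sym t s r q : noncrossing t s r q -> noncrossing r q t s.
Proof. by rewrite /noncrossing; lia. Qed.

Lemma pos_equiv_commute n t s r q : noncrossing t s r q ->
  valid_band n (a t s) -> valid_band n (a r q) -> pos_equiv n [:: a t s; a r q] [:: a r q; a t s].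
Proof.
rewrite -R1_condE => nc vts vrq.
exact: rt_step _ _ _ _ (pos_step_intro [::] [::] (or_introl (R1 vts vrq nc))).
Qed.

Definition compl (x y : band) : seq band :=
  let: (t, s) := x in let: (r, q) := y in
  if (t == r) && (s == q) then [::]
  else if t == r then (if q < s then [:: a s q] else [:: a t q])
  else if t == q then [:: a r s]
  else if s == r then [:: a s q]
  else if s == q then (if r < t then [:: a t r] else [:: a r s])
  else if [&& q < s, s < r & r < t] then [:: a t r; a s q]
  else if [&& s < q, q < t & t < r] then [:: a t q; a r s]
  else [:: a r q].
Arguments compl : simpl never.

Ltac case_compl := rewrite /compl /a /=; repeat case: ifP => /= ?; try done; try lia.

Lemma compl_self x : compl x x = [::].
Proof. by case: x => t s; rewrite /compl !eqxx. Qed.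

Lemma compl_noncrossing t s r q : noncrossing t s r q -> compl (a t s) (a r q) = [:: a r q].
Proof. by rewrite /noncrossing => nc; case_compl. Qed.

Lemma compl_valid n x y : valid_band n x -> valid_band n y -> pos_word n (compl x y).
Proof.
case: x y => t s [r q]; rewrite /valid_band /= => /and3P[? ? ?] /and3P[? ? ?].
by rewrite /compl /a; repeat case: ifP => ?; rewrite /pos_word /= /valid_band /=; lia.
Qed.

Lemma band_rel_compl n A B : band_rel n A B ->
  exists x z, A = x :: compl x z /\ B = z :: compl z x.
Proof.
case=> [t s r q _ _ | t s r ? ? ? ? | t s r ? ? ? ? | t s r ? ? ? ?].
- rewrite R1_condE => nc; exists (a t s), (a r q).
  by rewrite compl_noncrossing // compl_noncrossing //; apply: noncrossing_sym.
- by exists (a t s), (a t r); split; case_compl.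
- by exists (a t r), (a s r); split; case_compl.
- by exists (a t s), (a s r); split; case_compl.
Qed.

Definition R2_cond (k t s r : nat) : bool := [&& t <= k, s < t, r < s & 0 < r].

Definition rewrites2 (k : nat) (x y : band) : seq (seq band) :=
  (if [&& valid_band k x, valid_band k y & noncrossing x.1 x.2 y.1 y.2]
   then [:: [:: y; x]] else [::]) ++
  (if (x.2 == y.1) && R2_cond k x.1 x.2 y.2
   then [:: [:: a x.1 y.2; x]; [:: y; a x.1 y.2]] else [::]) ++
  (if (x.1 == y.1) && R2_cond k x.1 y.2 x.2
   then [:: [:: y; a y.2 x.2]; [:: a y.2 x.2; x]] else [::]) ++
  (if (x.2 == y.2) && R2_cond k y.1 x.1 x.2
   then [:: [:: y; a y.1 x.1]; [:: a y.1 x.1; x]] else [::]).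

Fixpoint rewrites (k : nat) (w : seq band) : seq (seq band) :=
  match w with
  | x :: ((y :: w2) as w1) =>
      [seq B ++ w2 | B <- rewrites2 k x y] ++ [seq x :: v | v <- rewrites k w1]
  | _ => [::]
  end.

Fixpoint explore (k fuel : nat) (front seen : seq (seq band)) : seq (seq band) :=
  if fuel is f.+1 then
    let new := undup [seq v <- flatten (map (rewrites k) front) | v \notin seen] in
    if new is [::] then seen else explore k f new (new ++ seen)
  else seen.

Definition pos_equivb (k : nat) (u v : seq band) : bool :=
  v \in explore k 30 [:: u] [:: u].

Lemma rewrites2_sound k x y B : B \in rewrites2 k x y ->
  band_rel k [:: x; y] B \/ band_rel k B [:: x; y].
Proof.
case: x y => t s [r q]; rewrite /rewrites2 /R2_cond /= !mem_cat => /or4P[].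
- case: ifP => [/and3P[vts vrq nc] | _] //; rewrite mem_seq1 => /eqP ->.
  by left; apply: R1; rewrite ?R1_condE.
- case: ifP => [/andP[/eqP <- /and4P[? ? ? ?]] | _] //.
  by rewrite !inE => /orP[] /eqP ->; left; [apply: R2a | apply: R2c].
- case: ifP => [/andP[/eqP <- /and4P[? ? ? ?]] | _] //.
  by rewrite !inE => /orP[] /eqP ->; [right; apply: R2a | left; apply: R2b].
- case: ifP => [/andP[/eqP <- /and4P[? ? ? ?]] | _] //.
  by rewrite !inE => /orP[] /eqP ->; right; [apply: R2b | apply: R2c].
Qed.

Lemma rewrites_sound k w v : v \in rewrites k w -> pos_step k w v.
Proof.
elim: w v => [|x [|y w2] IH] v //=.
rewrite mem_cat => /orP[/mapP[B /rewrites2_sound HB ->] | /mapP[v' /IH Hv' ->]].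
  exact: (pos_step_intro [::] w2 HB).
by case: Hv' => U V A B H; apply: (pos_step_intro (x :: U)).
Qed.

Lemma explore_sound k u fuel front seen :
  {in front, forall w, pos_equiv k u w} -> {in seen, forall w, pos_equiv k u w} ->
  {in explore k fuel front seen, forall w, pos_equiv k u w}.
Proof.
elim: fuel front seen => [|f IH] front seen Hfront Hseen //=.
set new := undup _.
have Hnew : {in new, forall w, pos_equiv k u w}.
  move=> w; rewrite mem_undup mem_filter => /andP[_ /flattenP[_ /mapP[w0 H0 ->] Hw]].
  exact: pos_equiv_trans (Hfront _ H0) (rt_step _ _ _ _ (rewrites_sound Hw)).
case: new Hnew => [|v l] Hnew //.
by apply: IH => // w; rewrite mem_cat => /orP[/Hnew | /Hseen].
Qed.

Lemma pos_equivbP k u v : pos_equivb k u v -> pos_equiv k u v.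
Proof. by apply: explore_sound => w; rewrite inE => /eqP ->; apply: pos_equiv_refl. Qed.

Definition relabel (phi : nat -> nat) (x : band) : band := (phi x.1, phi x.2).
Arguments relabel : simpl never.

Section Relabel.
Variable phi : nat -> nat.
Hypothesis phi_incr : forall i, phi i < phi i.+1.

Lemma phi_leE : {mono phi : i j / i <= j}.
Proof. exact/leq_mono/(homo_ltn ltn_trans). Qed.

Lemma phi_ltE : {mono phi : i j / i < j}.
Proof. exact/leqW_mono/phi_leE. Qed.

Lemma phi_eqE : {mono phi : i j / i == j}.
Proof. by move=> i j; rewrite !eqn_leq !phi_leE. Qed.

Lemma compl_relabel x y :
  compl (relabel phi x) (relabel phi y) = map (relabel phi) (compl x y).
Proof.
case: x y => t s [r q]; rewrite /compl /relabel /= !phi_eqE !phi_ltE.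
by repeat case: ifP.
Qed.

Lemma noncrossing_relabel t s r q :
  noncrossing (phi t) (phi s) (phi r) (phi q) = noncrossing t s r q.
Proof. by rewrite /noncrossing !phi_eqE !phi_ltE. Qed.

Variables k n : nat.
Hypothesis phi_k : phi k <= n.

Lemma valid_relabel x : valid_band k x -> valid_band n (relabel phi x).
Proof.
case: x => t s /and3P[s0 st tk]; rewrite /valid_band /= phi_ltE st.
have : phi 0 < phi s by rewrite phi_ltE.
have : phi t <= phi k by rewrite phi_leE.
lia.
Qed.

Lemma pos_word_relabel w : pos_word k w -> pos_word n (map (relabel phi) w).
Proof. by rewrite /pos_word all_map => /allP vw; apply/allP => x /vw /valid_relabel. Qed.

Lemma band_rel_relabel A B :
  band_rel k A B -> band_rel n (map (relabel phi) A) (map (relabel phi) B).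
Proof.
have R2_relabel t s r : t <= k -> s < t -> r < s -> 0 < r ->
    [/\ phi t <= n, phi s < phi t, phi r < phi s & 0 < phi r].
  move=> tk st rs r0; rewrite !phi_ltE; split=> //.
    by apply: leq_trans phi_k; rewrite phi_leE.
  by apply: leq_ltn_trans (leq0n (phi 0)) _; rewrite phi_ltE.
case=> [t s r q vts vrq | t s r tk st rs r0 | t s r tk st rs r0 | t s r tk st rs r0].
- rewrite R1_condE -(noncrossing_relabel t) => nc.
  apply: R1; [exact: (valid_relabel vts) | exact: (valid_relabel vrq) |].
  by rewrite R1_condE.
- by have [] := R2_relabel _ _ _ tk st rs r0; apply: R2a.
- by have [] := R2_relabel _ _ _ tk st rs r0; apply: R2b.
- by have [] := R2_relabel _ _ _ tk st rs r0; apply: R2c.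
Qed.

Lemma pos_equiv_relabel u v :
  pos_equiv k u v -> pos_equiv n (map (relabel phi) u) (map (relabel phi) v).
Proof.
elim=> [x y [U V A B H] | x | x y z _ H1 _ H2]; last exact: pos_equiv_trans H1 H2.
  by apply: rt_step; rewrite !map_cat; constructor; case: H => /band_rel_relabel; auto.
exact: pos_equiv_refl.
Qed.

End Relabel.

Lemma increasing_enumeration n (S : seq nat) : all (fun i => 0 < i <= n) S ->
  exists k (phi psi : nat -> nat),
    [/\ forall i, phi i < phi i.+1, phi k <= n, k <= size S &
        {in S, forall i, 0 < psi i <= k /\ phi (psi i) = i}].
Proof.
move=> /allP S_range.
pose T := sort leq (undup S); pose T0 := 0 :: T; pose k := size T.
have memT i : (i \in T) = (i \in S) by rewrite mem_sort mem_undup.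
have T0_incr : sorted ltn T0.
  rewrite /= path_min_sorted; last by apply/allP => i; rewrite memT => /S_range/andP[].
  by rewrite ltn_sorted_uniq_leq sort_uniq undup_uniq sort_sorted //; apply: leq_total.
have T0_last : nth 0 T0 k <= n.
  have /(mem_nth 0) : k < size T0 by [].
  by rewrite inE => /orP[/eqP -> // | ]; rewrite memT => /S_range/andP[].
pose phi j := if j <= k then nth 0 T0 j else nth 0 T0 k + (j - k).
exists k, phi, (index^~ T0); split.
- move=> i; rewrite /phi; case: (leqP i.+1 k) => [lt_ik | le_ki].
    by rewrite (ltnW lt_ik); apply: (pathP 0 T0_incr).
  by case: (leqP i k) => ?; [have -> : i = k by lia|]; lia.
- by rewrite /phi leqnn.
- by rewrite /k size_sort size_undup.
- move=> i Si; have i_pos : 0 < i by case/andP: (S_range _ Si).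
  have iT : i \in T by rewrite memT.
  have idx : index i T0 = (index i T).+1 by rewrite /= eq_sym (negbTE (lt0n_neq0 i_pos)).
  have idx_k : index i T0 <= k by rewrite idx index_mem.
  by rewrite /phi idx_k nth_index ?inE ?iT ?orbT // idx.
Qed.

Lemma relabel_from_small n (L : seq band) : pos_word n L ->
  exists k (phi psi : nat -> nat),
    [/\ forall i, phi i < phi i.+1, phi k <= n, k <= size L + size L,
        pos_word k (map (relabel psi) L) & {in L, cancel (relabel psi) (relabel phi)}].
Proof.
move=> vL; pose S := unzip1 L ++ unzip2 L.
have S_range : all (fun i => 0 < i <= n) S.
  rewrite all_cat !all_map; apply/andP.
  by split; apply/allP => -[t s] /(allP vL) /and3P[] /= *; lia.
have [k [phi [psi [phi_incr phi_k kS psiK]]]] := increasing_enumeration S_range.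
have inS x : x \in L -> x.1 \in S /\ x.2 \in S by move=> xL; rewrite !mem_cat !map_f ?orbT.
exists k, phi, psi; split=> //.
- by rewrite size_cat !size_map in kS.
- apply/allP => _ /mapP[[t s] tsL ->]; have /and3P[_ st _] := allP vL _ tsL.
  have [/psiK[/andP[_ tk] et] /psiK[/andP[s0 _] es]] := inS _ tsL.
  by rewrite /valid_band /relabel /= s0 tk andbT -(phi_ltE phi_incr) et es.
- by move=> [t s] /inS[/psiK[_ et] /psiK[_ es]]; rewrite /relabel /= et es.
Qed.

(* Subword reversing: completes [u] and [v] to [u ++ u'] and [v ++ v'] one pair of
   letters at a time; [None] when the fuel runs out. *)
Fixpoint compl_word (fuel : nat) (u v : seq band) : option (seq band * seq band) :=
  if fuel is f.+1 then
    match u, v with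
    | [::], _ => Some (v, [::])
    | _, [::] => Some ([::], u)
    | x :: u1, y :: v1 =>
      if compl_word f u1 (compl x y) is Some (u2, w) then
        if compl_word f v1 (compl y x ++ w) is Some (v2, u3) then Some (u2 ++ u3, v2)
        else None
      else None
    end
  else None.

Lemma compl_word_relabel phi : (forall i, phi i < phi i.+1) -> forall fuel u v,
  compl_word fuel (map (relabel phi) u) (map (relabel phi) v)
  = omap (fun p => (map (relabel phi) p.1, map (relabel phi) p.2)) (compl_word fuel u v).
Proof.
move=> phi_incr; elim=> [|f IH] [|x u] [|y v] //=.
rewrite compl_relabel // IH; case: (compl_word f u (compl x y)) => [[u2 w]|] //=.
rewrite compl_relabel // -map_cat IH; case: (compl_word f v (compl y x ++ w)) => [[v2 u3]|] //=.
by rewrite map_cat.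
Qed.

Definition letters (k : nat) : seq band := [seq (t, s) | t <- iota 1 k, s <- iota 1 t.-1].

Lemma letters_valid k x : valid_band k x -> x \in letters k.
Proof.
case: x => t s /and3P[/= s0 st tk]; apply/allpairsPdep; exists t, s.
by rewrite !mem_iota; split=> //; lia.
Qed.

Definition cube_fuel := 20.

(* The cube condition at x, z, y: if reversing (compl z x) against (compl z y)
   gives u and v, then (compl x z) u and (compl y z) v are (compl x y) g and
   (compl y x) g up to equivalence, for one and the same g.  The candidate g is
   found by one more reversing, then checked. *)
Definition cube_at (k : nat) (x z y : band) : bool :=
  if compl_word cube_fuel (compl z x) (compl z y) is Some (u, v) then
    let ux := compl x z ++ u in
    if compl_word cube_fuel (compl x y) ux is Some (g, [::]) then
      [&& pos_word k g, pos_equivb k ux (compl x y ++ g)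
        & pos_equivb k (compl y z ++ v) (compl y x ++ g)]
    else false
  else false.

Definition cube_check (k : nat) : bool :=
  all (fun x => all (fun z => all (cube_at k x z) (letters k)) (letters k)) (letters k).

Lemma cube_check_small k : k <= 6 -> cube_check k.
Proof.
move=> k6; have : all cube_check (iota 0 7) by vm_compute.
by move/allP; apply; rewrite mem_iota; lia.
Qed.

Lemma cube_condition n x z y :
  valid_band n x -> valid_band n z -> valid_band n y ->
  exists u v g, [/\ compl_word cube_fuel (compl z x) (compl z y) = Some (u, v), pos_word n g,
    pos_equiv n (compl x z ++ u) (compl x y ++ g) &
    pos_equiv n (compl y z ++ v) (compl y x ++ g)].
Proof.
move=> vx vz vy; have vL : pos_word n [:: x; z; y] by rewrite /pos_word /= vx vz vy.
have [k [phi [psi [phi_incr phi_k k6 vL' psiK]]]] := relabel_from_small vL.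
have /and4P[vx' vz' vy' _] := vL'.
have <- : relabel phi (relabel psi x) = x by apply: psiK; rewrite !inE eqxx.
have <- : relabel phi (relabel psi z) = z by apply: psiK; rewrite !inE eqxx orbT.
have <- : relabel phi (relabel psi y) = y by apply: psiK; rewrite !inE eqxx !orbT.
set x' := relabel psi x in vx' *; set z' := relabel psi z in vz' *; set y' := relabel psi y in vy' *.
have := cube_check_small k6.
move=> /allP/(_ _ (letters_valid vx'))/allP/(_ _ (letters_valid vz'))/allP/(_ _ (letters_valid vy')).
rewrite /cube_at; case E1: compl_word => [[u v]|] //.
case E2: compl_word => [[g [|//]]|//] /and3P[vg Hx Hy].
exists (map (relabel phi) u), (map (relabel phi) v), (map (relabel phi) g).
rewrite !(compl_relabel phi_incr) (compl_word_relabel phi_incr) E1; split=> //.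
- exact: (pos_word_relabel phi_incr phi_k).
- by rewrite -!map_cat; apply: (pos_equiv_relabel phi_incr phi_k); apply: pos_equivbP.
- by rewrite -!map_cat; apply: (pos_equiv_relabel phi_incr phi_k); apply: pos_equivbP.
Qed.

Definition compl_factor (n : nat) (x y : band) (X Y : seq band) : Prop :=
  exists Z, [/\ pos_word n Z, pos_equiv n X (compl x y ++ Z) & pos_equiv n Y (compl y x ++ Z)].

Definition factors_through_compl (n m : nat) : Prop :=
  forall x y X Y, pos_word n (x :: X) -> size X = m ->
  pos_equiv n (x :: X) (y :: Y) -> compl_factor n x y X Y.

Lemma pos_step_compl_factor n w1 w2 : pos_step n w1 w2 -> pos_word n w1 ->
  forall x X y Y, w1 = x :: X -> w2 = y :: Y -> compl_factor n x y X Y.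
Proof.
case=> U V A B HAB vw x X y Y; have Hs := pos_step_intro U V HAB.
have [x' [z' [eA eB]]] : exists x' z', A = x' :: compl x' z' /\ B = z' :: compl z' x'.
  by case: HAB => /band_rel_compl[p [q [-> ->]]]; [exists p, q | exists q, p].
subst A B; case: U Hs vw => [|u U] Hs vw /= [<- <-] [<- <-].
  exists V; split; try exact: pos_equiv_refl.
  by move: vw; rewrite /= pos_word_cat => /and3P[].
exists (U ++ z' :: compl z' x' ++ V); rewrite compl_self; split.
- by have [_ /(_ vw) /andP[]] := pos_step_size_valid Hs.
- exact: rt_step (pos_step_intro U V HAB).
- exact: pos_equiv_refl.
Qed.

Section Merge.
Variables n m : nat.
Hypothesis IH : forall j, j < m -> factors_through_compl n j.

Lemma compl_word_factor fuel u v u' v' : compl_word fuel u v = Some (u', v') ->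
  forall A B, pos_word n (u ++ A) -> pos_word n (v ++ B) -> size (u ++ A) <= m ->
  pos_equiv n (u ++ A) (v ++ B) ->
  exists C, [/\ pos_word n C, pos_equiv n A (u' ++ C) & pos_equiv n B (v' ++ C)].
Proof.
elim: fuel u v u' v' => [|f IHf] [|x u] [|y v] u' v' //=.
- by case=> <- <- A B _ vB _ H; exists B; split; last exact: pos_equiv_refl.
- case=> <- <- A B _ vB _ H; exists B; split=> //; last exact: pos_equiv_refl.
  by case/andP: vB => _; rewrite pos_word_cat => /andP[].
- case=> <- <- A B vA _ _ H; exists A; split; try exact: pos_equiv_refl.
    by case/andP: vA => _; rewrite pos_word_cat => /andP[].
  exact: pos_equiv_sym.
case E1: (compl_word f u (compl x y)) => [[u2 w]|] //.
case E2: (compl_word f v (compl y x ++ w)) => [[v2 u3]|] // [<- <-] A B.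
move=> vxuA /andP[vy vvB] sz H; have /andP[vx vuA] := vxuA.
have [W [vW HuA HvB]] := IH sz vxuA erefl H.
have vxyW : pos_word n (compl x y ++ W) by rewrite pos_word_cat compl_valid.
have [C1 [vC1 HA HW]] := IHf _ _ _ _ E1 A W vuA vxyW (ltnW sz) HuA.
have HvB' : pos_equiv n (v ++ B) ((compl y x ++ w) ++ C1).
  by rewrite -catA; apply: pos_equiv_trans HvB _; apply: pos_equiv_catl.
have szB : size (v ++ B) <= m by move: (pos_equiv_size H) sz => /= [<-]; lia.
have [C2 [vC2 HB HC1]] := IHf _ _ _ _ E2 B C1 vvB (pos_equiv_valid HvB' vvB) szB HvB'.
exists C2; split=> //; rewrite -catA.
exact: pos_equiv_trans HA (pos_equiv_catl u2 HC1).
Qed.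

Lemma compl_factor_merge x z y X V Y Z1 Z2 :
  valid_band n x -> valid_band n z -> valid_band n y ->
  pos_word n Z1 -> pos_word n Z2 -> size V <= m ->
  pos_equiv n X (compl x z ++ Z1) -> pos_equiv n V (compl z x ++ Z1) ->
  pos_equiv n V (compl z y ++ Z2) -> pos_equiv n Y (compl y z ++ Z2) ->
  compl_factor n x y X Y.
Proof.
move=> vx vz vy vZ1 vZ2 sV HX HV1 HV2 HY.
have [u [v [g [Ec vg Hxz Hyz]]]] := cube_condition vx vz vy.
have [W [vW HZ1 HZ2]] : exists W, [/\ pos_word n W, pos_equiv n Z1 (u ++ W)
    & pos_equiv n Z2 (v ++ W)].
  apply: (compl_word_factor Ec); rewrite ?pos_word_cat ?compl_valid //.
    by rewrite -(pos_equiv_size HV1).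
  exact: pos_equiv_trans (pos_equiv_sym HV1) HV2.
exists (g ++ W); split; first by rewrite pos_word_cat vg.
- apply: pos_equiv_trans (pos_equiv_trans HX (pos_equiv_catl _ HZ1)) _.
  by rewrite !catA; apply: pos_equiv_catr.
- apply: pos_equiv_trans (pos_equiv_trans HY (pos_equiv_catl _ HZ2)) _.
  by rewrite !catA; apply: pos_equiv_catr.
Qed.

End Merge.

Lemma factors_through_compl_all n m : factors_through_compl n m.
Proof.
elim/ltn_ind: m => m IH x y X Y vxX sX H.
suff chain w1 w2 : pos_equiv n w1 w2 -> pos_word n w1 -> size w1 = m.+1 ->
    forall x X y Y, w1 = x :: X -> w2 = y :: Y -> compl_factor n x y X Y.
  by apply: (chain _ _ H vxX) => //=; rewrite sX.
elim=> {w1 w2} [w1 w2 Hs | w | w1 w2 w3 H12 IH12 H23 IH23].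
- by move=> vw _; apply: pos_step_compl_factor.
- move=> vw _ x0 X0 y0 Y0 ew; subst w => -[<- <-].
  have /andP[_ vX0] := vw.
  by exists X0; rewrite compl_self; split=> //; exact: pos_equiv_refl.
move=> vw1 sw1 x0 X0 y0 Y0 e1 e3; have vw2 := pos_equiv_valid H12 vw1.
have sw2 : size w2 = m.+1 by rewrite -(pos_equiv_size H12).
case: w2 H12 IH12 H23 IH23 vw2 sw2 => [|z V] // H12 IH12 H23 IH23 vw2 sw2.
have [Z1 [vZ1 HX HV1]] := IH12 vw1 sw1 _ _ _ _ e1 erefl.
have [Z2 [vZ2 HV2 HY]] := IH23 vw2 sw2 _ _ _ _ erefl e3.
have vy0 : valid_band n y0 by move: (pos_equiv_valid H23 vw2); rewrite e3 => /andP[].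
move: vw1 vw2; rewrite e1 => /andP[vx0 _] /andP[vz _].
by apply: (compl_factor_merge IH) HX HV1 HV2 HY => //; case: sw2 => ->.
Qed.

Theorem theorem2p3 (n : nat) (X Y : seq band) (t s r q : nat) :
  pos_word n X -> pos_word n Y ->
  valid_band n (a t s) -> valid_band n (a r q) ->
  pos_equiv n (a t s :: X) (a r q :: Y) ->
  (* (I) *)
  ((t = r /\ s = q) -> pos_equiv n X Y) /\
  (* (II)(i) *)
  ((t = r /\ (q < s)%N) -> exists Z, pos_word n Z /\
      pos_equiv n X (a s q :: Z) /\ pos_equiv n Y (a t s :: Z)) /\
  (* (II)(ii) *)
  ((t = r /\ (s < q)%N) -> exists Z, pos_word n Z /\
      pos_equiv n X (a t q :: Z) /\ pos_equiv n Y (a q s :: Z)) /\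
  (* (II)(iii) *)
  (t = q -> exists Z, pos_word n Z /\
      pos_equiv n X (a r s :: Z) /\ pos_equiv n Y (a t s :: Z)) /\
  (* (II)(iv) *)
  (s = r -> exists Z, pos_word n Z /\
      pos_equiv n X (a s q :: Z) /\ pos_equiv n Y (a t q :: Z)) /\
  (* (II)(v) *)
  ((s = q /\ (r < t)%N) -> exists Z, pos_word n Z /\
      pos_equiv n X (a t r :: Z) /\ pos_equiv n Y (a t s :: Z)) /\
  (* (II)(vi) *)
  ((s = q /\ (t < r)%N) -> exists Z, pos_word n Z /\
      pos_equiv n X (a r s :: Z) /\ pos_equiv n Y (a r t :: Z)) /\
  (* (III) *)
  (uniq [:: t; s; r; q] ->
   (0 < ((t%:Z - r%:Z) * (t%:Z - q%:Z) * (s%:Z - r%:Z) * (s%:Z - q%:Z))%R)%R ->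
   exists Z, pos_word n Z /\
      pos_equiv n X (a r q :: Z) /\ pos_equiv n Y (a t s :: Z)) /\
  (* (IV)(i) *)
  (uniq [:: t; s; r; q] -> [&& q < s, s < r & r < t]%N ->
   exists Z, pos_word n Z /\
      pos_equiv n X (a t r :: a s q :: Z) /\ pos_equiv n Y (a t q :: a r s :: Z)) /\
  (* (IV)(ii) *)
  (uniq [:: t; s; r; q] -> [&& s < q, q < t & t < r]%N ->
   exists Z, pos_word n Z /\
      pos_equiv n X (a t q :: a r s :: Z) /\ pos_equiv n Y (a r t :: a q s :: Z)).
Proof.
move=> vX vY vts vrq H.
have vtsX : pos_word n (a t s :: X) by apply/andP.
have [Z [vZ HX HY]] := factors_through_compl_all vtsX erefl H.
have common u v : compl (a t s) (a r q) = u -> compl (a r q) (a t s) = v ->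
    exists Z, pos_word n Z /\ pos_equiv n X (u ++ Z) /\ pos_equiv n Y (v ++ Z).
  by move=> <- <-; exists Z.
have /and3P[/= s0 st tn] := vts; have /and3P[/= q0 qr rn] := vrq.
rewrite R1_condE; repeat split.
- case=> ? ?; subst r q; move: HX HY; rewrite compl_self => HX /pos_equiv_sym.
  exact: pos_equiv_trans HX.
- by case=> ? ?; subst r; apply: (common [:: _] [:: _]); case_compl.
- by case=> ? ?; subst r; apply: (common [:: _] [:: _]); case_compl.
- by move=> ?; subst q; apply: (common [:: _] [:: _]); case_compl.
- by move=> ?; subst r; apply: (common [:: _] [:: _]); case_compl.
- by case=> ? ?; subst q; apply: (common [:: _] [:: _]); case_compl.
- by case=> ? ?; subst q; apply: (common [:: _] [:: _]); case_compl.
- move=> _ nc; apply: (common [:: _] [:: _]); first exact: compl_noncrossing.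
  exact/compl_noncrossing/noncrossing_sym.
- move=> _ /and3P[qs sr rt].
  have E1 : compl (a t s) (a r q) = [:: a t r; a s q] by case_compl.
  have E2 : compl (a r q) (a t s) = [:: a r s; a t q] by case_compl.
  have [W [vW [HXW HYW]]] := common _ _ E1 E2.
  exists W; do 2 split=> //; rewrite -[a t q :: _]/([:: a t q; a r s] ++ W).
  apply: pos_equiv_trans HYW (pos_equiv_catr W _).
  by apply: pos_equiv_commute; rewrite /valid_band /noncrossing /=; lia.
- by move=> _ /and3P[? ? ?]; apply: (common [:: _; _] [:: _; _]); case_compl.
Qed.
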